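(* For every state $x\in\mathcal X$ and every dataset $\mathbb D_N$, the GP-CBF-SOCP at $x$, $$\min_{u\in\mathbb R^m}\ \|u-u_{\text{ref}}(x)\|_2^2\quad\text{s.t.}\quad L_{\tilde f}B(x)+L_{\tilde g}B(x)u+\mu_B(x,u|\mathbb D_N)-\beta\,\sigma_B(x,u|\mathbb D_N)+\gamma(B(x))\ge 0,$$ is a convex optimization problem. Specifically, it is a second-order cone program: it has the same minimizer(s) $u$ as a problem with a linear objective subject to second-order cone constraints.
   Context: Consider the control-affine system $\dot x=f(x)+g(x)u$ with state $x\in\mathcal X\subset\mathbb R^n$ and input $u\in\mathbb R^m$. Here $f:\mathcal X\to\mathbb R^n$ and $g:\mathcal X\to\mathbb R^{n\times m}$ are locally Lipschitz and unknown. A nominal model $\tilde f:\mathcal X\to\mathbb R^n$, $\tilde g:\mathcal X\to\mathbb R^{n\times m}$ is available. Let $B:\mathcal X\to\mathbb R$ be continuously differentiable, let $\gamma$ be an extended class-$\mathcal K_\infty$ function, and let $u_{\text{ref}}:\mathcal X\to\mathbb R^m$ be a reference controller. Lie derivatives: $L_{\tilde f}B(x)=\nabla B(x)\tilde f(x)\in\mathbb R$ and $L_{\tilde g}B(x)=\nabla B(x)\tilde g(x)\in\mathbb R^{1\times m}$; $L_fB$ and $L_gB$ are defined in the same way. Set $\Delta_B(x,u)=(L_fB-L_{\tilde f}B)(x)+(L_gB-L_{\tilde g}B)(x)u$. A dataset $\mathbb D_N=\{((x_j,u_j),z_j)\}_{j=1}^N$ consists of noisy measurements $z_j=\Delta_B(x_j,u_j)+\epsilon_j$.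 GP model (affine dot product kernel): - Kernels $k_1,\dots,k_{m+1}:\mathcal X\times\mathcal X\to\mathbb R$ are given, and $k_c((x,y),(x',y'))=y^T\mathrm{diag}(k_1(x,x'),\dots,k_{m+1}(x,x'))y'$ for $y,y'\in\mathbb R^{m+1}$. - Let $y_j=[1,u_j^T]^T$, $\mathbf z=(z_1,\dots,z_N)^T$, let $\sigma_n>0$ be the noise parameter, and let $K_c\in\mathbb R^{N\times N}$ have entries $k_c((x_i,y_i),(x_j,y_j))$. - Let $K_{**}(x)=\mathrm{diag}(k_1(x,x),\dots,k_{m+1}(x,x))$, and let $K_{*Y}(x)\in\mathbb R^{(m+1)\times N}$ have $(i,j)$ entry $k_i(x,x_j)(y_j)_i$. - Define $m_B(x|\mathbb D_N)=K_{*Y}(K_c+\sigma_n^2I)^{-1}\mathbf z\in\mathbb R^{m+1}$ and $\Sigma_B(x|\mathbb D_N)=K_{**}-K_{*Y}(K_c+\sigma_n^2I)^{-1}K_{*Y}^T$. The matrix $\Sigma_B(x|\mathbb D_N)$ is positive definite. - The GP posterior mean and standard deviation of $\Delta_B$ are $\mu_B(x,u|\mathbb D_N)=m_B(x|\mathbb D_N)^T[1;u]$ and $\sigma_B(x,u|\mathbb D_N)=\sqrt{[1,u^T]\Sigma_B(x|\mathbb D_N)[1;u]}$. $\beta>0$ is a given constant. *)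

From HB Require Import structures.
From mathcomp Require Import all_boot all_order all_algebra.
From mathcomp Require Import all_classical all_reals all_analysis.
Set Implicit Arguments. Unset Strict Implicit. Unset Printing Implicit Defensive.
Import Order.TTheory GRing.Theory Num.Theory.
Import numFieldNormedType.Exports.
Local Open Scope classical_set_scope.
Local Open Scope ring_scope.

Section Defs.
Variable R : realType.

Definition norm2 (p : nat) (v : 'cV[R]_p) : R := Num.sqrt (\sum_i (v i 0) ^+ 2).

Definition sc (M : 'M[R]_1) : R := M 0 0.

Definition ext_classKinf (g : R -> R) : Prop :=
  continuous g /\ (forall a b : R, a < b -> g a < g b) /\ g 0 = 0 /\
  (g x @[x --> +oo] --> +oo) /\ (g x @[x --> -oo] --> -oo).

Definition is_kernel (n : nat) (k : 'cV[R]_n -> 'cV[R]_n -> R) : Prop :=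
  (forall x y, k x y = k y x) /\
  (forall (p : nat) (pts : 'I_p -> 'cV[R]_n) (c : 'cV[R]_p),
     0 <= sc (c^T *m (\matrix_(i, j) k (pts i) (pts j)) *m c)).

Definition posdef (p : nat) (S : 'M[R]_p) : Prop :=
  S^T = S /\ forall v : 'cV[R]_p, v != 0 -> 0 < sc (v^T *m S *m v).

Definition ext1 (m : nat) (u : 'cV[R]_m) : 'cV[R]_(1 + m) := col_mx 1%:M u.

Definition LieF (n : nat) (B : 'cV[R]_n -> R) (ft : 'cV[R]_n -> 'cV[R]_n)
  (x : 'cV[R]_n) : R := 'd B x (ft x).
Definition LieG (n m : nat) (B : 'cV[R]_n -> R) (gt : 'cV[R]_n -> 'M[R]_(n, m))
  (x : 'cV[R]_n) : 'rV[R]_m := \row_i 'd B x (col i (gt x)).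

(* GP model with the affine dot product kernel *)
Section GP.
Variables (n m N : nat) (k : 'I_(1 + m) -> 'cV[R]_n -> 'cV[R]_n -> R)
  (xs : 'I_N -> 'cV[R]_n) (us : 'I_N -> 'cV[R]_m) (z : 'cV[R]_N) (sn : R).

Definition ys (j : 'I_N) : 'cV[R]_(1 + m) := ext1 (us j).
Definition Kc : 'M[R]_N :=
  \matrix_(i, j) \sum_l (ys i l 0) * k l (xs i) (xs j) * (ys j l 0).
Definition Kss (x : 'cV[R]_n) : 'M[R]_(1 + m) := diag_mx (\row_l k l x x).
Definition KsY (x : 'cV[R]_n) : 'M[R]_(1 + m, N) :=
  \matrix_(l, j) (k l x (xs j) * ys j l 0).
Definition Kinv : 'M[R]_N := invmx (Kc + (sn ^+ 2)%:M).
Definition mB (x : 'cV[R]_n) : 'cV[R]_(1 + m) := KsY x *m Kinv *m z.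
Definition SigmaB (x : 'cV[R]_n) : 'M[R]_(1 + m) :=
  Kss x - KsY x *m Kinv *m (KsY x)^T.
Definition muB (x : 'cV[R]_n) (u : 'cV[R]_m) : R := sc ((mB x)^T *m ext1 u).
Definition sigmaB (x : 'cV[R]_n) (u : 'cV[R]_m) : R :=
  Num.sqrt (sc ((ext1 u)^T *m SigmaB x *m ext1 u)).
End GP.

Definition is_minimizer (p : nat) (f : 'cV[R]_p -> R) (S : set 'cV[R]_p)
  (u : 'cV[R]_p) : Prop := S u /\ forall v, S v -> f u <= f v.

Record soc_con (p : nat) := SOC {
  soc_dim : nat;
  soc_A : 'M[R]_(soc_dim, p);
  soc_b : 'cV[R]_soc_dim;
  soc_c : 'cV[R]_p;
  soc_d : R }.

Definition soc_holds (p : nat) (C : soc_con p) (w : 'cV[R]_p) : Prop :=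
  norm2 (soc_A C *m w + soc_b C) <= sc ((soc_c C)^T *m w) + soc_d C.

Definition socp_feasible (p q : nat) (cs : 'I_q -> soc_con p) : set 'cV[R]_p :=
  [set w | forall i, soc_holds (cs i) w].
End Defs.

From HB Require Import structures.
From mathcomp Require Import all_boot all_order all_algebra.
From mathcomp Require Import all_classical all_reals all_analysis.
From mathcomp Require Import ring lra.
Import Order.TTheory GRing.Theory Num.Theory.
Import numFieldNormedType.Exports.
Local Open Scope classical_set_scope.
Local Open Scope ring_scope.

Set Implicit Arguments. Unset Strict Implicit. Unset Printing Implicit Defensive.

(* The posterior covariance Sigma_B(x) is positive definite, so it factors as
   L^T L (Cholesky) and beta sigma_B(x, u) = ||beta L [1; u]||_2.  As mu_B is
   affine in u, the GP-CBF constraint becomes ||beta L [1; u]||_2 <= a + g u, a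
   second-order cone constraint, and such sets are convex by the triangle
   inequality.  Minimizing ||u - u_ref||^2 is equivalent to minimizing t under
   the extra cone constraint ||u - u_ref||_2 <= t, since squaring is monotone on
   nonnegative reals. *)

Lemma conv_lmodE (R : numDomainType) (E : lmodType R) (t : {i01 R})
    (u v : convex_lmodType E) :
  conv t u v = t%:num *: (u : E) + (1 - t%:num) *: (v : E).
Proof. by []. Qed.

Section Euclidean.
Variable R : realType.

Lemma scD (A B : 'M[R]_1) : sc (A + B) = sc A + sc B.
Proof. by rewrite /sc mxE. Qed.

Lemma scZ (a : R) (A : 'M[R]_1) : sc (a *: A) = a * sc A.
Proof. by rewrite /sc mxE. Qed.

Lemma sc_tr (A : 'M[R]_1) : sc A^T = sc A.
Proof. by rewrite /sc mxE. Qed.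

Lemma sc_scalar (a : R) : sc a%:M = a.
Proof. by rewrite /sc mxE. Qed.

Lemma sc_mul_tr p (v : 'cV[R]_p) : sc (v^T *m v) = \sum_i v i 0 ^+ 2.
Proof. by rewrite /sc !mxE; apply: eq_bigr => i _; rewrite !mxE expr2. Qed.

Lemma sc_mul_tr_ge0 p (v : 'cV[R]_p) : 0 <= sc (v^T *m v).
Proof. by rewrite sc_mul_tr; apply: sumr_ge0 => i _; rewrite sqr_ge0. Qed.

Lemma norm2E p (v : 'cV[R]_p) : norm2 v = Num.sqrt (sc (v^T *m v)).
Proof. by rewrite sc_mul_tr. Qed.

Lemma norm2_mulmx p q (A : 'M[R]_(q, p)) (v : 'cV[R]_p) :
  norm2 (A *m v) = Num.sqrt (sc (v^T *m (A^T *m A) *m v)).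
Proof. by rewrite norm2E trmx_mul !mulmxA. Qed.

Lemma norm2_ge0 p (v : 'cV[R]_p) : 0 <= norm2 v.
Proof. exact: sqrtr_ge0. Qed.

Lemma sqr_norm2 p (v : 'cV[R]_p) : norm2 v ^+ 2 = sc (v^T *m v).
Proof. by rewrite norm2E sqr_sqrtr // sc_mul_tr_ge0. Qed.

Lemma norm2Z p (a : R) (v : 'cV[R]_p) : norm2 (a *: v) = `|a| * norm2 v.
Proof.
rewrite !norm2E -sqrtr_sqr -sqrtrM ?sqr_ge0 //.
by rewrite !linearZ /= -scalemxAl !scZ mulrA -expr2.
Qed.

Lemma sqr_sum_mul_le p (a b : 'I_p -> R) :
  (\sum_i a i * b i) ^+ 2 <= (\sum_i a i ^+ 2) * (\sum_i b i ^+ 2).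
Proof.
set A := \sum_i a i ^+ 2; set B := \sum_i b i ^+ 2; set C := \sum_i a i * b i.
have A_ge0 : 0 <= A by apply: sumr_ge0 => i _; rewrite sqr_ge0.
have [A0|A_neq0] := eqVneq A 0.
  have a0 i : a i = 0.
    by apply/eqP; rewrite -sqrf_eq0; move/psumr_eq0P: A0 => -> // j _; rewrite sqr_ge0.
  by rewrite /C big1 ?A0 ?mul0r ?expr0n // => i _; rewrite a0 mul0r.
have expand : \sum_i (A * b i - C * a i) ^+ 2 = A * (A * B - C ^+ 2).
  under eq_bigr => i _ do rewrite sqrrB !exprMn.
  rewrite big_split sumrB /= -!mulr_sumr sumrMnl -/A -/B.
  rewrite (_ : \sum_i A * b i * (C * a i) = A * C * \sum_i a i * b i) -/C.
    by ring.
  by rewrite mulr_sumr; apply: eq_bigr => i _; ring.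
have : 0 <= A * (A * B - C ^+ 2).
  by rewrite -expand; apply: sumr_ge0 => i _; rewrite sqr_ge0.
by rewrite pmulr_rge0 ?subr_ge0 // lt_def A_neq0.
Qed.

Lemma norm2D p (u v : 'cV[R]_p) : norm2 (u + v) <= norm2 u + norm2 v.
Proof.
have uv_le : \sum_i u i 0 * v i 0 <= norm2 u * norm2 v.
  apply: le_trans (ler_norm _) _.
  rewrite -sqrtr_sqr /norm2 -sqrtrM; last by apply: sumr_ge0 => i _; rewrite sqr_ge0.
  exact/ler_wsqrtr/sqr_sum_mul_le.
rewrite -ler_sqr ?nnegrE ?addr_ge0 ?norm2_ge0 // sqrrD !sqr_norm2 !sc_mul_tr.
have -> : \sum_i (u + v) i 0 ^+ 2 =
    \sum_i u i 0 ^+ 2 + 2 * \sum_i u i 0 * v i 0 + \sum_i v i 0 ^+ 2.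
  by rewrite mulr_sumr -!big_split; apply: eq_bigr => i _ /=; rewrite !mxE; ring.
by rewrite -mulr_natl; lra.
Qed.

Lemma convex_sqr_dist p (r : 'cV[R]_p) :
  convex_function [set: 'cV[R]_p] (fun u : 'cV[R]_p => sc ((u - r)^T *m (u - r))).
Proof.
move=> t u v _ _; rewrite convRE conv_lmodE !sc_mul_tr; set l := t%:num.
have l_ge0 : 0 <= l by rewrite /l ge0.
have l_le1 : 0 <= 1 - l by rewrite subr_ge0 /l le1.
rewrite /unstable.onem !mulr_sumr -big_split /=; apply: ler_sum => i _; rewrite !mxE.
(* The convexity gap of the square is [l (1 - l) (u_i - v_i)^2]. *)
rewrite -subr_ge0 (_ : _ - _ = l * (1 - l) * (u i 0 - v i 0) ^+ 2); last by ring.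
by rewrite mulr_ge0 ?sqr_ge0 ?mulr_ge0.
Qed.

End Euclidean.

Section Cholesky.
Variable R : realType.

Lemma quad_form_block p (x : 'cV[R]_1) (y : 'cV[R]_p) (a : 'M[R]_1)
    (b : 'M[R]_(1, p)) (d : 'M[R]_p) :
  sc ((col_mx x y)^T *m block_mx a b b^T d *m col_mx x y) =
  x 0 0 ^+ 2 * a 0 0 + 2 * (x 0 0 * sc (b *m y)) + sc (y^T *m d *m y).
Proof.
rewrite tr_col_mx mul_row_block mul_row_col [x]mx11_scalar tr_scalar_mx.
rewrite !mul_scalar_mx !mulmxDl -!scalemxAl -[y^T *m b^T]trmx_mul !mul_mx_scalar.
by rewrite !scD !scZ sc_tr /sc !mxE eqxx /=; ring.
Qed.

Definition schur_compl p (a : 'M[R]_1) (b : 'M[R]_(1, p)) (d : 'M[R]_p) :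
  'M[R]_p := d - (a 0 0)^-1 *: (b^T *m b).

Lemma posdef_schur p (a : 'M[R]_1) (b : 'M[R]_(1, p)) (d : 'M[R]_p) :
  posdef (block_mx a b b^T d) ->
  0 < a 0 0 /\ posdef (schur_compl a b d).
Proof.
move=> [S_sym S_pos].
have d_sym : d^T = d.
  by move: S_sym; rewrite tr_block_mx trmxK => /eq_block_mx[].
have quad_pos (x : 'cV[R]_1) (y : 'cV[R]_p) : col_mx x y != 0 ->
    0 < x 0 0 ^+ 2 * a 0 0 + 2 * (x 0 0 * sc (b *m y)) + sc (y^T *m d *m y).
  by move=> /S_pos; rewrite quad_form_block.
have a_gt0 : 0 < a 0 0.
  have /quad_pos : col_mx 1%:M 0 != 0 :> 'cV[R]_(1 + p).
    rewrite col_mx_eq0 negb_and; apply/orP; left.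
    by apply/eqP => /matrixP/(_ 0 0)/eqP; rewrite !mxE oner_eq0.
  by rewrite !mulmx0 /sc !mxE /= expr1n mul1r !mulr0 !addr0.
split=> //; split=> [|v v_neq0].
  by rewrite /schur_compl linearB /= linearZ /= trmx_mul trmxK d_sym.
(* Evaluating the form at the minimizing first coordinate [- s / a] leaves the
   Schur complement. *)
set al := a 0 0; pose s := sc (b *m v).
have min_neq0 : col_mx (- (al^-1 * s))%:M v != 0.
  by rewrite col_mx_eq0 negb_and v_neq0 orbT.
have -> : sc (v^T *m schur_compl a b d *m v) = sc (v^T *m d *m v) - al^-1 * s ^+ 2.
  rewrite /schur_compl mulmxBr mulmxBl -scalemxAr -scalemxAl mulmxA.
  by rewrite -(mulmxA _ b) -trmx_mul /s /sc !mxE big_ord1 !mxE expr2.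
move: (quad_pos _ _ min_neq0); rewrite mxE /= mulr1n -/s -/al.
have al_neq0 : al != 0 by rewrite gt_eqF.
by rewrite (_ : _ + _ + _ = sc (v^T *m d *m v) - al^-1 * s ^+ 2) //; field.
Qed.

Lemma block_mx_factor p (a : 'M[R]_1) (b : 'M[R]_(1, p)) (d A : 'M[R]_p) :
  0 < a 0 0 -> schur_compl a b d = A^T *m A ->
  exists A' : 'M[R]_(1 + p), block_mx a b b^T d = A'^T *m A'.
Proof.
move=> a_gt0 schurE; set r := Num.sqrt (a 0 0).
have r_neq0 : r != 0 by rewrite gt_eqF // sqrtr_gt0.
have rr : r * r = a 0 0 by rewrite -expr2 sqr_sqrtr // ltW.
exists (block_mx r%:M (r^-1 *: b) 0 A).
rewrite tr_block_mx mulmx_block !trmx0 !mul0mx !mulmx0 !addr0 tr_scalar_mx.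
rewrite -scalar_mxM rr -mx11_scalar mul_scalar_mx mul_mx_scalar !linearZ /=.
rewrite -scalemxAl !scalerA mulVf // -invfM rr !scale1r.
by rewrite -schurE /schur_compl addrC subrK.
Qed.

Lemma posdef_factor p (S : 'M[R]_p) : posdef S -> exists A : 'M[R]_p, S = A^T *m A.
Proof.
elim: p S => [|p IH] S S_posdef.
  by exists 0; rewrite [S]flatmx0 [_ *m _]flatmx0.
pose S' : 'M[R]_(1 + p) := S.
have S_block : S' = block_mx (ulsubmx S') (ursubmx S') (ursubmx S')^T (drsubmx S').
  have /eq_block_mx[_ _ -> _] : block_mx (ulsubmx S')^T (dlsubmx S')^T
      (ursubmx S')^T (drsubmx S')^T = block_mx (ulsubmx S') (ursubmx S')
      (dlsubmx S') (drsubmx S').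
    by rewrite -tr_block_mx submxK; case: S_posdef.
  by rewrite submxK.
move: S_posdef; rewrite -/S' S_block => /posdef_schur[a_gt0 /IH[A schurE]].
exact: block_mx_factor schurE.
Qed.

End Cholesky.

Section SecondOrderCone.
Variable R : realType.

Lemma convex_soc p (C : soc_con R p) : convex_set [set w | soc_holds C w].
Proof.
move=> u v t; rewrite !inE /soc_holds /= conv_lmodE; set l := t%:num => hu hv.
have l_ge0 : 0 <= l by rewrite /l ge0.
have l_le1 : 0 <= 1 - l by rewrite subr_ge0 /l le1.
have -> : soc_A C *m (l *: u + (1 - l) *: v) + soc_b C =
    l *: (soc_A C *m u + soc_b C) + (1 - l) *: (soc_A C *m v + soc_b C).
  by rewrite mulmxDr -!scalemxAr !scalerDr addrACA -scalerDl subrKC scale1r.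
apply: le_trans (norm2D _ _) _.
rewrite !norm2Z !ger0_norm // mulmxDr -!scalemxAr scD !scZ.
have := ler_wpM2l l_ge0 hu; have := ler_wpM2l l_le1 hv; lra.
Qed.

Definition soc_comp p q (C : soc_con R p) (P : 'M[R]_(p, q)) : soc_con R q :=
  SOC (soc_A C *m P) (soc_b C) (P^T *m soc_c C) (soc_d C).

Lemma soc_holds_comp p q (C : soc_con R p) (P : 'M[R]_(p, q)) w :
  soc_holds (soc_comp C P) w <-> soc_holds C (P *m w).
Proof. by rewrite /soc_holds /= trmx_mul trmxK !mulmxA. Qed.

Definition soc_pair p (C1 C2 : soc_con R p) (i : 'I_2) : soc_con R p :=
  if i == ord0 then C1 else C2.

Lemma socp_feasible_pair p (C1 C2 : soc_con R p) w :
  socp_feasible (soc_pair C1 C2) w <-> soc_holds C1 w /\ soc_holds C2 w.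
Proof.
split=> [feas | [h1 h2] i]; last by rewrite /soc_pair; case: ifP.
by split; [exact: (feas ord0) | exact: (feas ord_max)].
Qed.

End SecondOrderCone.

Section Epigraph.
Variables (R : realType) (m : nat).

Definition epi_proj : 'M[R]_(m, m + 1) := row_mx 1%:M 0.
Definition epi_coord : 'cV[R]_(m + 1) := col_mx 0 1%:M.

Lemma epi_projE u (t : 'cV[R]_1) : epi_proj *m col_mx u t = u.
Proof. by rewrite mul_row_col mul1mx mul0mx addr0. Qed.

Lemma epi_coordE u (t : 'cV[R]_1) : sc (epi_coord^T *m col_mx u t) = sc t.
Proof. by rewrite tr_col_mx mul_row_col trmx0 mul0mx trmx1 mul1mx add0r. Qed.

Definition soc_dist (r : 'cV[R]_m) : soc_con R (m + 1) :=
  SOC epi_proj (- r) epi_coord 0.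

Lemma soc_holds_dist r u t :
  soc_holds (soc_dist r) (col_mx u t) <-> norm2 (u - r) <= sc t.
Proof. by rewrite /soc_holds /= epi_projE epi_coordE addr0. Qed.

Lemma is_minimizer_epigraph (f : 'cV[R]_m -> R) (F : set 'cV[R]_m)
    (G : set 'cV[R]_(m + 1)) :
  (forall u, 0 <= f u) ->
  (forall u t, G (col_mx u t) <-> F u /\ f u <= sc t) ->
  forall u, is_minimizer (fun u => f u ^+ 2) F u <->
    exists t, is_minimizer (fun w => sc (epi_coord^T *m w)) G (col_mx u t).
Proof.
move=> f_ge0 GE u; split=> [[Fu u_min] | [t [/GE[Fu fu_le] t_min]]].
  exists (f u)%:M; split; first by apply/GE; rewrite sc_scalar.
  move=> w; rewrite -[w]vsubmxK epi_coordE => /GE[Fw fw_le].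
  rewrite epi_coordE sc_scalar; apply: le_trans fw_le.
  by rewrite -ler_sqr ?nnegrE ?f_ge0 //; exact: u_min.
split=> // v Fv; rewrite ler_sqr ?nnegrE ?f_ge0 //.
have /t_min : G (col_mx v (f v)%:M) by apply/GE; rewrite sc_scalar.
by rewrite !epi_coordE sc_scalar; exact: le_trans fu_le.
Qed.

End Epigraph.

Arguments epi_proj {R m}.
Arguments epi_coord {R m}.

Section CBFConstraint.
Variables (R : realType) (n m N : nat) (ft : 'cV[R]_n -> 'cV[R]_n)
  (gt : 'cV[R]_n -> 'M[R]_(n, m)) (B : 'cV[R]_n -> R) (gam : R -> R)
  (k : 'I_(1 + m) -> 'cV[R]_n -> 'cV[R]_n -> R) (xs : 'I_N -> 'cV[R]_n)
  (us : 'I_N -> 'cV[R]_m) (z : 'cV[R]_N) (sn beta : R) (x : 'cV[R]_n)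
  (L : 'M[R]_(1 + m)).

Lemma ext1E (u : 'cV[R]_m) : ext1 u = ext1 0 + col_mx 0 1%:M *m u.
Proof. by rewrite /ext1 mul_col_mx mul0mx mul1mx add_col_mx addr0 add0r. Qed.

Definition cbf_soc : soc_con R m :=
  SOC (beta *: (L *m col_mx 0 1%:M)) (beta *: (L *m ext1 0))
    (LieG B gt x + (mB k xs us z sn x)^T *m col_mx 0 1%:M)^T
    (LieF B ft x + muB k xs us z sn x 0 + gam (B x)).

Lemma cbf_soc_holds u : 0 <= beta -> SigmaB k xs us sn x = L^T *m L ->
  0 <= LieF B ft x + sc (LieG B gt x *m u) + muB k xs us z sn x u
         - beta * sigmaB k xs us sn x u + gam (B x) <->
  soc_holds cbf_soc u.
Proof.
move=> beta_ge0 SigmaBE.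
have sigmaBE : sigmaB k xs us sn x u = norm2 (L *m ext1 u).
  by rewrite norm2_mulmx -SigmaBE.
have muBE : muB k xs us z sn x u =
    muB k xs us z sn x 0 + sc ((mB k xs us z sn x)^T *m col_mx 0 1%:M *m u).
  by rewrite /muB [in LHS]ext1E mulmxDr scD mulmxA.
rewrite /soc_holds /= trmxK -!scalemxAl -scalerDr norm2Z ger0_norm //.
rewrite -mulmxA -mulmxDr [_ *m u + _]addrC -ext1E -sigmaBE muBE mulmxDl scD.
by split; lra.
Qed.

End CBFConstraint.

Theorem theorem1 (R : realType) (n m N : nat) (X : set 'cV[R]_n)
  (ft : 'cV[R]_n -> 'cV[R]_n) (gt : 'cV[R]_n -> 'M[R]_(n, m))
  (B : 'cV[R]_n -> R) (gam : R -> R) (uref : 'cV[R]_n -> 'cV[R]_m)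
  (k : 'I_(1 + m) -> 'cV[R]_n -> 'cV[R]_n -> R) (sn beta : R) :
  (forall x, X x -> differentiable B x) ->
  (forall v, {within X, continuous (fun y => 'd B y v)}) ->
  ext_classKinf gam ->
  (forall l, is_kernel (k l)) ->
  0 < sn -> 0 < beta ->
  forall (x : 'cV[R]_n), X x ->
  forall (xs : 'I_N -> 'cV[R]_n) (us : 'I_N -> 'cV[R]_m) (z : 'cV[R]_N),
  (forall j, X (xs j)) ->
  posdef (SigmaB k xs us sn x) ->
  let J := fun u : 'cV[R]_m => sc ((u - uref x)^T *m (u - uref x)) in
  let F := [set u : 'cV[R]_m | 0 <= LieF B ft x + sc (LieG B gt x *m u)
              + muB k xs us z sn x u - beta * sigmaB k xs us sn x u
              + gam (B x)] in
  convex_function [set: 'cV[R]_m] J /\ convex_set F /\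
  exists (q : nat) (cs : 'I_q -> soc_con R (m + 1)) (c : 'cV[R]_(m + 1)),
    (forall (u : 'cV[R]_m) (t : 'cV[R]_1),
       socp_feasible cs (col_mx u t) <-> F u /\ norm2 (u - uref x) <= sc t) /\
    (forall u : 'cV[R]_m, is_minimizer J F u <->
       exists t : 'cV[R]_1,
         is_minimizer (fun w => sc (c^T *m w)) (socp_feasible cs) (col_mx u t)).
Proof.
(* The regularity of [B], [gam] and the kernels, and [0 < sn], only make the
   data meaningful; convexity does not use them. *)
move=> _ _ _ _ _ beta_gt0 x _ xs us z _ /posdef_factor[L SigmaBE] J F.
pose C := cbf_soc ft gt B gam k xs us z sn beta x L.
have FE : F = [set u | soc_holds C u].
  by apply/funext => u; apply/propext; apply: cbf_soc_holds => //; exact: ltW.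
have JE : J = fun u => norm2 (u - uref x) ^+ 2.
  by apply/funext => u; rewrite sqr_norm2.
pose cs := soc_pair (soc_comp C epi_proj) (soc_dist (uref x)).
have feasE (u : 'cV[R]_m) (t : 'cV[R]_1) :
    socp_feasible cs (col_mx u t) <-> F u /\ norm2 (u - uref x) <= sc t.
  by rewrite socp_feasible_pair soc_holds_comp epi_projE soc_holds_dist FE.
split; first exact: convex_sqr_dist.
split; first by rewrite FE; exact: convex_soc.
exists 2, cs, epi_coord; split=> // u; rewrite JE.
exact: is_minimizer_epigraph (fun u => norm2_ge0 _) feasE u.
Qed.
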